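(* Let $\varphi:X\to\mathbb R$ be Lipschitz continuous. If $\underline{x}\in\Omega_\varphi$, then the sequence $\left\{\sum_{i=0}^{n-1}\big(\varphi(\sigma^i\underline{x})-\alpha_\varphi\big)\right\}_{n\in\mathbb N_0}$ is bounded.
   Context: $X=[0,1]^{\mathbb N_0}$ with metric $d_X(\underline{x},\underline{y})=\sum_{i\ge0}|x_i-y_i|/2^{i+1}$ and shift $\sigma(\underline{x})_i=x_{i+1}$. $\alpha_\varphi=\inf_\mu\int\varphi\,d\mu$ over $\sigma$-invariant Borel probability measures. $B(\underline{x},\underline{y},n;\varepsilon)=\{\underline{z}: d_X(\underline{x},\underline{z})<\varepsilon,\ d_X(\sigma^n\underline{z},\underline{y})<\varepsilon\}$. Mañé potential $S_\varphi(\underline{x},\underline{y})=\lim_{\varepsilon\to0}\inf\{\sum_{i=0}^{n-1}(\varphi(\sigma^i\underline{z})-\alpha_\varphi): n\in\mathbb N,\ \underline{z}\in B(\underline{x},\underline{y},n;\varepsilon)\}$; Aubry set $\Omega_\varphi=\{\underline{x}: S_\varphi(\underline{x},\underline{x})=0\}$. *)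

From HB Require Import structures.
From mathcomp Require Import all_boot all_order all_algebra.
From mathcomp Require Import all_classical all_reals all_analysis.
Set Implicit Arguments. Unset Strict Implicit. Unset Printing Implicit Defensive.
Import Order.TTheory GRing.Theory Num.Theory.
Import numFieldNormedType.Exports.
Local Open Scope classical_set_scope.
Local Open Scope ring_scope.

Record Xsp (R : realType) := mkX {
  xval :> nat -> R ;
  xprop : forall i, 0 <= xval i <= 1 }.

HB.instance Definition _ (R : realType) := gen_eqMixin (Xsp R).
HB.instance Definition _ (R : realType) := gen_choiceMixin (Xsp R).
Lemma Xsp0_prop (R : realType) : forall i : nat, 0 <= (fun _ => 0 : R) i <= 1.
Proof. by move=> i; rewrite lexx ler01. Qed.
HB.instance Definition _ (R : realType) :=
  isPointed.Build (Xsp R) (@mkX R (fun _ => 0) (@Xsp0_prop R)).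

Definition dX (R : realType) (x y : Xsp R) : R :=
  limn (fun n => \sum_(i < n) (`|x i - y i| / 2 ^+ i.+1)).

Definition sshift (R : realType) (x : Xsp R) : Xsp R :=
  @mkX R (fun i => x i.+1) (fun i => xprop x i.+1).

Definition dX_open (R : realType) : set (set (Xsp R)) :=
  [set U | forall x, U x -> exists2 e : R, 0 < e & forall z, dX x z < e -> U z].

Definition XB (R : realType) := g_sigma_algebraType (@dX_open R).

Definition invariant (R : realType) (mu : probability (XB R) R) : Prop :=
  forall A : set (XB R), measurable A -> mu (@sshift R @^-1` A) = mu A.

Definition alpha (R : realType) (phi : Xsp R -> R) : R :=
  fine (ereal_inf [set (\int[mu]_x (phi x)%:E)%E
                   | mu in [set mu : probability (XB R) R | invariant mu]]).

Definition Bset (R : realType) (x y : Xsp R) (n : nat) (eps : R) : set (Xsp R) :=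
  [set z | dX x z < eps /\ dX (iter n (@sshift R) z) y < eps].

Definition birkhoff (R : realType) (phi : Xsp R -> R) (n : nat) (z : Xsp R) : R :=
  \sum_(0 <= i < n) (phi (iter i (@sshift R) z) - alpha phi).

Definition mane (R : realType) (phi : Xsp R -> R) (x y : Xsp R) : \bar R :=
  lim ((fun eps : R =>
          ereal_inf [set (birkhoff phi nz.1 nz.2)%:E
                    | nz in [set nz : nat * Xsp R | (0 < nz.1)%N /\ Bset x y nz.1 eps nz.2]])
        @ 0^'+).

Definition aubry (R : realType) (phi : Xsp R -> R) : set (Xsp R) :=
  [set x | mane phi x x = 0%E].

From HB Require Import structures.
From mathcomp Require Import all_boot all_order all_algebra.
From mathcomp Require Import all_classical all_reals all_analysis.
From mathcomp Require Import lra.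
Import Order.TTheory GRing.Theory Num.Theory numFieldNormedType.Exports.
Local Open Scope classical_set_scope.
Local Open Scope ring_scope.

(* Write A_n for the Birkhoff sums of phi - alpha_phi and L for a Lipschitz constant.
   Two points agreeing on their first k coordinates have orbits whose distances grow
   geometrically up to time k, so their sums A_k differ by at most L times the distance
   of their k-th shifts.  Gluing r copies of the first k coordinates of a point y in front
   of x, preceded by a long prefix of x, yields near-returns to x whose sums are about
   r (A_k y + L); since sums along near-returns to a point of the Aubry set are bounded
   below, A_k y >= -L for all k and y.  Conversely, for every eps there is a near-return z
   with A_m z < eps; gluing n copies of its first m coordinates in front of x gives a point
   that eps-shadows x for n steps, whence A_n x <= L + O(eps).  So |A_n x| <= L. *)

Set Implicit Arguments.
Unset Strict Implicit.

Section ShiftMetric.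
Variable R : realType.
Implicit Types a b c : Xsp R.
Local Notation sh := (@sshift R).

Lemma Xsp_ext a b : (forall j, a j = b j) -> a = b.
Proof.
case: a b => fa pa [fb pb] /= eq_ab.
have eqf : fa = fb by apply: funext.
by subst; congr mkX; exact: Prop_irrelevance.
Qed.

Lemma iter_sshiftE i a j : iter i sh a j = a (j + i)%N.
Proof. by elim: i a j => [|i IH] a j /=; [rewrite addn0 | rewrite IH addnS]. Qed.

Definition dX_partial n a b : R := \sum_(i < n) (`|a i - b i| / 2 ^+ i.+1).

Lemma dist_coord_le1 a b i : `|a i - b i| <= 1.
Proof.
have := xprop a i; have := xprop b i => /andP[? ?] /andP[? ?].
by rewrite ler_norml; apply/andP; split; lra.
Qed.

Lemma dX_partialS n a b :
  dX_partial n.+1 a b = `|a 0%N - b 0%N| / 2 + dX_partial n (sh a) (sh b) / 2.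
Proof.
rewrite /dX_partial big_ord_recl /= expr1; congr (_ + _).
rewrite mulr_suml; apply: eq_bigr => i _ /=.
by rewrite exprS invfM mulrA mulrAC.
Qed.

Lemma dX_partial_ge0 n a b : 0 <= dX_partial n a b.
Proof. by apply: sumr_ge0 => i _; apply: divr_ge0. Qed.

Lemma dX_partial_le1 n a b : dX_partial n a b <= 1.
Proof.
elim: n a b => [|n IH] a b; first by rewrite /dX_partial big_ord0.
rewrite dX_partialS; have := IH (sh a) (sh b); have := dist_coord_le1 a b 0.
lra.
Qed.

Lemma nondecreasing_dX_partial a b : nondecreasing_seq (fun n => dX_partial n a b).
Proof.
apply/nondecreasing_seqP => n; rewrite /dX_partial big_ord_recr /= lerDl.
exact: divr_ge0.
Qed.

Lemma cvgn_dX_partial a b : cvgn (fun n => dX_partial n a b).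
Proof.
apply: nondecreasing_is_cvgn; first exact: nondecreasing_dX_partial.
by exists 1 => _ [n _ <-]; exact: dX_partial_le1.
Qed.

Lemma dX_partial_le_dX n a b : dX_partial n a b <= dX a b.
Proof.
exact: nondecreasing_cvgn_le (@nondecreasing_dX_partial a b) (@cvgn_dX_partial a b) n.
Qed.

Lemma dX_le a b B : (forall n, dX_partial n a b <= B) -> dX a b <= B.
Proof.
move=> le_B; apply: limr_le; first exact: cvgn_dX_partial.
by near=> n; apply: le_B.
Unshelve. all: by end_near. Qed.

Lemma dX_ge0 a b : 0 <= dX a b.
Proof. exact: le_trans (dX_partial_ge0 0 a b) (dX_partial_le_dX 0 a b). Qed.

Lemma dX_le1 a b : dX a b <= 1.
Proof. by apply: dX_le => n; exact: dX_partial_le1. Qed.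

Lemma dXC a b : dX a b = dX b a.
Proof.
rewrite /dX; congr (limn _); apply: funext => n.
by apply: eq_bigr => i _; rewrite distrC.
Qed.

Lemma dX_triangle a b c : dX a c <= dX a b + dX b c.
Proof.
apply: dX_le => n; apply: le_trans (lerD (dX_partial_le_dX n a b) (dX_partial_le_dX n b c)).
rewrite /dX_partial -big_split /=; apply: ler_sum => i _.
rewrite -mulrDl ler_wpM2r ?invr_ge0 ?exprn_ge0 //.
by rewrite -[a i - c i](subrKA (b i)) ler_normD.
Qed.

Lemma dXxx a : dX a a = 0.
Proof.
apply/eqP; rewrite eq_le dX_ge0 andbT; apply: dX_le => n.
by rewrite /dX_partial big1 // => i _; rewrite subrr normr0 mul0r.
Qed.

Lemma dX_le_sshift a b : dX a b <= `|a 0%N - b 0%N| / 2 + dX (sh a) (sh b) / 2.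
Proof.
apply: dX_le => n; apply: le_trans (nondecreasing_dX_partial a b (leqnSn n)) _.
by rewrite dX_partialS lerD2l ler_wpM2r // dX_partial_le_dX.
Qed.

Lemma dX_sshift_le a b : dX (sh a) (sh b) <= 2 * dX a b.
Proof.
apply: dX_le => n; have := dX_partial_le_dX n.+1 a b; rewrite dX_partialS.
have := normr_ge0 (a 0%N - b 0%N); lra.
Qed.

Lemma dX_iter_le i a b : dX (iter i sh a) (iter i sh b) <= 2 ^+ i * dX a b.
Proof.
elim: i => [|i IH]; first by rewrite expr0 mul1r.
by apply: le_trans (dX_sshift_le _ _) _; rewrite exprS -mulrA ler_pM2l.
Qed.

Lemma dX_prefix N a b : (forall j, (j < N)%N -> a j = b j) ->
  dX a b <= (2 ^+ N)^-1 * dX (iter N sh a) (iter N sh b).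
Proof.
elim: N a b => [|N IH] a b eq_ab; first by rewrite expr0 invr1 mul1r.
apply: le_trans (dX_le_sshift a b) _.
rewrite eq_ab // subrr normr0 mul0r add0r.
have := IH (sh a) (sh b) (fun j jN => eq_ab j.+1 jN).
by rewrite -!iterSr exprS invfM; lra.
Qed.

Lemma sum_dX_prefix k a b : (forall j, (j < k)%N -> a j = b j) ->
  \sum_(0 <= i < k) dX (iter i sh a) (iter i sh b) <= dX (iter k sh a) (iter k sh b).
Proof.
elim: k => [|k IH] eq_ab; first by rewrite big_geq // dX_ge0.
have half : dX (iter k sh a) (iter k sh b) <= dX (iter k.+1 sh a) (iter k.+1 sh b) / 2.
  have eq0 : forall j, (j < 1)%N -> iter k sh a j = iter k sh b j.
    by case=> // _; rewrite !iter_sshiftE add0n eq_ab.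
  by have := dX_prefix eq0; rewrite expr1 mulrC.
have := IH (fun j jk => eq_ab j (ltnW jk)).
by rewrite big_nat_recr //=; lra.
Qed.

End ShiftMetric.

Section Splice.
Variable R : realType.
Implicit Types a b : Xsp R.
Local Notation sh := (@sshift R).

Definition splice N a b : Xsp R :=
  @mkX R (fun j => if (j < N)%N then a j else b (j - N)%N)
    (fun j => if (j < N)%N as t return 0 <= (if t then a j else b (j - N)%N) <= 1
              then xprop a j else xprop b (j - N)%N).

Lemma splice_prefix N a b j : (j < N)%N -> splice N a b j = a j.
Proof. by move=> /= ->. Qed.

Lemma iter_splice N a b : iter N sh (splice N a b) = b.
Proof.
by apply: Xsp_ext => j; rewrite iter_sshiftE /= ltnNge leq_addl /= addnK.
Qed.

End Splice.

Section Birkhoff.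
Variables (R : realType) (phi : Xsp R -> R).
Implicit Types a b x y : Xsp R.
Local Notation sh := (@sshift R).
Local Notation A := (birkhoff phi).

Lemma birkhoffD n m a : A (n + m) a = A n a + A m (iter n sh a).
Proof.
rewrite /birkhoff (big_cat_nat (n := n)) ?leq_addr //=; congr (_ + _).
rewrite -{1}(add0n n) big_addn addKn.
by apply: eq_bigr => i _; rewrite iterD.
Qed.

Variable L : R.
Hypothesis phi_lip : forall a b, `|phi a - phi b| <= L * dX a b.

Lemma birkhoff_le_lip n a b :
  A n a <= A n b + L * \sum_(0 <= i < n) dX (iter i sh a) (iter i sh b).
Proof.
rewrite /birkhoff mulr_sumr -big_split /=; apply: ler_sum => i _.
by have := phi_lip (iter i sh a) (iter i sh b); rewrite ler_norml => /andP[_]; lra.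
Qed.

Lemma birkhoff_le_prefix n a b : 0 <= L -> (forall j, (j < n)%N -> a j = b j) ->
  A n a <= A n b + L * dX (iter n sh a) (iter n sh b).
Proof.
move=> L_ge0 eq_ab; apply: le_trans (birkhoff_le_lip n a b) _.
by rewrite lerD2l ler_wpM2l // sum_dX_prefix.
Qed.

(* [blocks x k y r] is the word [y_0 ... y_(k-1)] repeated [r] times, followed by [x]. *)
Definition blocks x k y r := iter r (splice k y) x.

Lemma iter_blocksS x k y r : iter k sh (blocks x k y r.+1) = blocks x k y r.
Proof. by rewrite /blocks iterS iter_splice. Qed.

Lemma iter_blocks x k y r : iter (r * k) sh (blocks x k y r) = x.
Proof.
by elim: r => [|r IH]; rewrite ?mul0n // mulSnr iterD iter_blocksS.
Qed.

Lemma blocksS_prefix x k y r j : (j < k)%N -> blocks x k y r.+1 j = y j.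
Proof. by move=> jk; rewrite /blocks iterS splice_prefix. Qed.

Lemma birkhoff_blocks x k y D : 0 <= L ->
  (forall r, dX (blocks x k y r) (iter k sh y) <= D) ->
  forall r, A (r * k) (blocks x k y r) <= r%:R * (A k y + L * D).
Proof.
move=> L_ge0 dist_D; elim=> [|r IH]; first by rewrite mul0n mul0r /birkhoff big_geq.
rewrite mulSn birkhoffD iter_blocksS mulrSr.
have := birkhoff_le_prefix L_ge0 (@blocksS_prefix x k y r).
rewrite iter_blocksS => block_le.
have := ler_wpM2l L_ge0 (dist_D r); lra.
Qed.

End Birkhoff.

Lemma exists_invX2_lt (R : archiFieldType) (e : R) : 0 < e ->
  exists2 N : nat, (0 < N)%N & (2 ^+ N)^-1 < e.
Proof.
move=> e_gt0; set N := (Num.trunc e^-1).+1; exists N => //.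
have N_le : N%:R <= 2 ^+ N :> R by rewrite -natrX ler_nat ltnW // ltn_expl.
rewrite -ltf_pV2 ?posrE ?exprn_gt0 ?invr_gt0 // invrK.
exact: lt_le_trans (truncnS_gt e^-1) N_le.
Qed.

Lemma ler_addgt0_mulr (R : realFieldType) (a b K : R) : 0 <= K ->
  (forall e, 0 < e -> a <= b + e * K) -> a <= b.
Proof.
move=> K_ge0 le_ab; apply/ler_addgt0Pr => e e_gt0.
have K1_gt0 : 0 < K + 1 by lra.
apply: le_trans (le_ab (e / (K + 1)) (divr_gt0 e_gt0 K1_gt0)) _.
rewrite lerD2l mulrAC ler_pdivrMr // ler_wpM2l; lra.
Qed.

Section LowerBound.
Variables (R : realType) (phi : Xsp R -> R) (L : R).
Hypotheses (L_ge0 : 0 <= L) (phi_lip : forall a b, `|phi a - phi b| <= L * dX a b).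
Variables (x : Xsp R) (e c : R).
Hypothesis e_gt0 : 0 < e.
Hypothesis near_return_ge :
  forall m z, (0 < m)%N -> Bset x x m e z -> c <= birkhoff phi m z.
Local Notation sh := (@sshift R).
Local Notation A := (birkhoff phi).

Lemma birkhoff_ge_lip k y : - L <= A k y.
Proof.
rewrite leNgt; apply/negP => lt_kL.
have [N N_gt0 small_N] := exists_invX2_lt e_gt0.
pose w r := splice N x (blocks x k y r).
have w_prefix r j : (j < N)%N -> w r j = x j by exact: splice_prefix.
have w_return r : Bset x x (N + r * k) e (w r).
  split; last by rewrite addnC iterD iter_splice iter_blocks dXxx.
  rewrite dXC; apply: le_lt_trans (dX_prefix (w_prefix r)) _.
  by apply: le_lt_trans small_N; rewrite ler_piMr ?invr_ge0 ?exprn_ge0 ?dX_le1.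
have A_w r : A (N + r * k) (w r) <= A N x + L + r%:R * (A k y + L).
  rewrite birkhoffD iter_splice.
  have := birkhoff_le_prefix phi_lip L_ge0 (w_prefix r).
  have := ler_wpM2l L_ge0 (dX_le1 (iter N sh (w r)) (iter N sh x)).
  have := birkhoff_blocks phi_lip L_ge0 (fun r => dX_le1 (blocks x k y r) (iter k sh y)) r.
  by rewrite mulr1; lra.
have [r lt_r] : exists r : nat, (A N x + L - c) / - (A k y + L) < r%:R.
  by exists (Num.trunc ((A N x + L - c) / - (A k y + L))).+1; exact: truncnS_gt.
have c_le : c <= A (N + r * k) (w r).
  by apply: near_return_ge (w_return r); rewrite addn_gt0 N_gt0.
move: lt_r; rewrite ltr_pdivrMr; last by lra.
have := A_w r; lra.
Qed.

End LowerBound.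

Section UpperBound.
Variables (R : realType) (phi : Xsp R -> R) (L : R).
Hypotheses (L_ge0 : 0 <= L) (phi_lip : forall a b, `|phi a - phi b| <= L * dX a b).
Hypothesis birkhoff_ge : forall k y, - L <= birkhoff phi k y.
Variables (x z : Xsp R) (m : nat) (eps : R).
Hypotheses (m_gt0 : (0 < m)%N) (z_return : Bset x x m eps z).
Local Notation sh := (@sshift R).
Local Notation A := (birkhoff phi).
Local Notation U := (blocks x m z).

Lemma dX_blocks_near_return r : dX (U r) x <= 3 * eps.
Proof.
case: z_return => xz mzx; rewrite dXC in xz; rewrite dXC in mzx.
have eps_gt0 : 0 < eps := le_lt_trans (dX_ge0 _ _) xz.
elim: r => [|r IH]; first by rewrite dXxx; lra.
have half : dX (U r.+1) z <= dX (U r) (iter m sh z) / 2.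
  apply: le_trans (dX_prefix (@blocksS_prefix _ x m z r)) _.
  rewrite iter_blocksS mulrC ler_wpM2l ?dX_ge0 //.
  by rewrite lef_pV2 ?posrE ?exprn_gt0 // -[X in X <= _]expr1 ler_eXn2l ?ltr1n.
have := dX_triangle (U r) x (iter m sh z).
have := dX_triangle (U r.+1) z x.
lra.
Qed.

Lemma birkhoff_le_near_return n :
  A n x <= L + n%:R * A m z + eps * (L * n%:R * (4 + 3 * 2 ^+ n)).
Proof.
have eps_gt0 : 0 < eps by case: z_return => xz _; exact: le_lt_trans (dX_ge0 _ _) xz.
have dist_sum : \sum_(0 <= i < n) dX (iter i sh x) (iter i sh (U n))
    <= n%:R * (2 ^+ n * (3 * eps)).
  rewrite mulr_natl -[in leRHS](subn0 n) -sumr_const_nat; apply: ler_sum_nat => i /andP[_ lt_in].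
  apply: le_trans (dX_iter_le i x (U n)) _.
  apply: ler_pM; rewrite ?exprn_ge0 ?dX_ge0 //.
    by rewrite ler_eXn2l ?ltr1n // subn0 ltnW.
  by rewrite dXC dX_blocks_near_return.
have dist_blocks r : dX (U r) (iter m sh z) <= 4 * eps.
  case: z_return => _ mzx; have := dX_triangle (U r) x (iter m sh z).
  have := dX_blocks_near_return r; rewrite dXC in mzx; lra.
have prefix_le : A n (U n) <= A (n * m) (U n) + L.
  have le_n_nm : (n <= n * m)%N by rewrite leq_pmulr.
  rewrite -[in A (n * m) _](subnKC le_n_nm) birkhoffD.
  have := birkhoff_ge (n * m - n) (iter n sh (U n)); lra.
have := birkhoff_blocks phi_lip L_ge0 dist_blocks n.
have := birkhoff_le_lip phi_lip n x (U n).
have := ler_wpM2l L_ge0 dist_sum.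
nra.
Qed.

End UpperBound.

Section AubrySet.
Variables (R : realType) (phi : Xsp R -> R) (x : Xsp R).

Definition near_return_inf (eps : R) : \bar R :=
  ereal_inf [set (birkhoff phi nz.1 nz.2)%:E
     | nz in [set nz : nat * Xsp R | (0 < nz.1)%N /\ Bset x x nz.1 eps nz.2]].

Lemma near_return_inf_nonincreasing : nonincreasing_fun near_return_inf.
Proof.
move=> e1 e2 le_e12; apply: le_ereal_inf => _ [[n z] /= [n_gt0 [xz nzx]] <-].
by exists (n, z) => //=; split => //; split; exact: lt_le_trans le_e12.
Qed.

Lemma cvg_near_return_inf : cvg (near_return_inf e @[e --> 0^'+]).
Proof.
apply: nonincreasing_at_right_is_cvge; near=> e.
by move=> a b _ _; exact: near_return_inf_nonincreasing.
Unshelve. all: by end_near. Qed.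

Hypothesis x_aubry : aubry phi x.

Lemma aubry_near_return_inf_le0 eps : 0 < eps -> (near_return_inf eps <= 0)%E.
Proof.
move=> eps_gt0; rewrite -[leRHS]x_aubry.
apply: lime_ge; first exact: cvg_near_return_inf.
near=> e; apply: near_return_inf_nonincreasing; near: e; exact: nbhs_right_le.
Unshelve. all: by end_near. Qed.

Lemma aubry_near_return_ge : exists2 e, 0 < e &
  forall m z, (0 < m)%N -> Bset x x m e z -> -1 <= birkhoff phi m z.
Proof.
suff [e e_gt0 inf_ge] : exists2 e, 0 < e & (-1 <= near_return_inf e)%E.
  exists e => // m z m_gt0 z_return; rewrite -lee_fin.
  by apply: le_trans inf_ge _; apply: ereal_inf_lbound; exists (m, z).
apply: contrapT => inf_lt.
have : (lim (near_return_inf e @[e --> 0^'+]) <= -1)%E.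
  apply: lime_le; first exact: cvg_near_return_inf.
  near=> e; have e_gt0 : 0 < e by near: e; exact: nbhs_right_gt.
  by rewrite leNgt; apply/negP => /ltW ?; apply: inf_lt; exists e.
by rewrite [lim _]x_aubry lee_fin; lra.
Unshelve. all: by end_near. Qed.

Lemma aubry_near_return_lt eps delta : 0 < eps -> 0 < delta ->
  exists m z, [/\ (0 < m)%N, Bset x x m eps z & birkhoff phi m z < delta].
Proof.
move=> eps_gt0 delta_gt0.
have : (near_return_inf eps < delta%:E)%E.
  by apply: le_lt_trans (aubry_near_return_inf_le0 eps_gt0) _; rewrite lte_fin.
by move=> /ereal_inf_lt [_ [[m z] /= [m_gt0 z_return] <-]]; rewrite lte_fin; exists m, z.
Qed.

End AubrySet.

Unset Implicit Arguments.

Theorem proposition2p9 (R : realType) (phi : Xsp R -> R)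
  (phi_lip : exists L : R, forall x y : Xsp R, `|phi x - phi y| <= L * dX x y)
  (x : Xsp R) (hx : aubry phi x) :
  exists M : R, forall n : nat,
    `|\sum_(0 <= i < n) (phi (iter i (@sshift R) x) - alpha phi)| <= M.
Proof.
have [L L_ge0 lipL] : exists2 L : R, 0 <= L & forall a b, `|phi a - phi b| <= L * dX a b.
  case: phi_lip => L lipL; exists (Num.max L 0); first by rewrite le_max lexx orbT.
  by move=> a b; apply: le_trans (lipL a b) _; rewrite ler_wpM2r ?dX_ge0 ?le_max ?lexx.
have [e e_gt0 ge_return] := aubry_near_return_ge hx.
have A_ge := birkhoff_ge_lip L_ge0 lipL e_gt0 ge_return.
exists L => n; change (`|birkhoff phi n x| <= L).
rewrite ler_norml A_ge /=.
apply: (@ler_addgt0_mulr _ _ _ (n%:R + L * n%:R * (4 + 3 * 2 ^+ n))).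
  by rewrite addr_ge0 ?mulr_ge0 ?addr_ge0 ?mulr_ge0 ?exprn_ge0.
move=> eps eps_gt0.
have [m [z [m_gt0 z_return lt_eps]]] := aubry_near_return_lt hx eps_gt0 eps_gt0.
have := birkhoff_le_near_return L_ge0 lipL A_ge m_gt0 z_return n.
have : n%:R * birkhoff phi m z <= n%:R * eps by rewrite ler_wpM2l // ltW.
lra.
Qed.
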